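(* Let $p$ be an odd prime and let $k$ be an integer with $2\le k\le p-1$. Let $T$ be an orthogonal trade in $B_p$ of index $(1,k)$. Then every symbol that occurs in $T$ occurs in $T$ at least $3$ times.
   Context: All arithmetic is modulo $p$, with elements of $\mathbb{Z}_p$ represented by residues $0,\dots,p-1$. A Latin square of order $p$ is viewed as a set of (row, column, symbol) triples in $\mathbb{Z}_p^3$. For $1\le k\le p-1$, $B_p(k)$ is the Latin square with symbol $ki+j$ in cell $(i,j)$, $i,j\in\mathbb{Z}_p$; $B_p=B_p(1)$. A Latin trade in a Latin square $L$ is a subset $T\subseteq L$ for which there is a partial Latin square $T'$ (a disjoint mate of $T$) such that $T$ and $T'$ occupy the same set of cells, $T\cap T'=\emptyset$, and each row (respectively column) of $T$ contains the same set of symbols as the corresponding row (column) of $T'$; then $(L\setminus T)\cup T'$ is a Latin square. Two Latin squares of order $p$ are orthogonal if superimposing them yields each of the $p^2$ ordered pairs of symbols exactly once. An orthogonal trade of index $(\ell,k)$ is a Latin trade $T\subseteq B_p(\ell)$ having a disjoint mate $T'$ such that $(B_p(\ell)\setminus T)\cup T'$ is orthogonal to $B_p(k)$. *)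

(* Elements of Z_p are represented by ordinals 'I_p (residues
   0..p-1); arithmetic is done on their nat values modulo p. *)
From mathcomp Require Import all_boot.
Set Implicit Arguments. Unset Strict Implicit. Unset Printing Implicit Defensive.

Definition triple (p : nat) := ('I_p * 'I_p * 'I_p)%type.

Definition trow {p} (t : triple p) : 'I_p := t.1.1.
Definition tcol {p} (t : triple p) : 'I_p := t.1.2.
Definition tsym {p} (t : triple p) : 'I_p := t.2.

Definition Bp (p k : nat) : {set triple p} :=
  [set t : triple p | nat_of_ord (tsym t) == (k * trow t + tcol t) %% p].

Definition partial_latin {p} (P : {set triple p}) : Prop :=
  forall t u, t \in P -> u \in P ->
    [/\ (trow t = trow u /\ tcol t = tcol u -> t = u),
        (trow t = trow u /\ tsym t = tsym u -> t = u) &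
        (tcol t = tcol u /\ tsym t = tsym u -> t = u)].

Definition cells {p} (P : {set triple p}) : {set 'I_p * 'I_p} :=
  [set (trow t, tcol t) | t in P].
Definition row_syms {p} (P : {set triple p}) (i : 'I_p) : {set 'I_p} :=
  [set tsym t | t in P & trow t == i].
Definition col_syms {p} (P : {set triple p}) (j : 'I_p) : {set 'I_p} :=
  [set tsym t | t in P & tcol t == j].

Definition disjoint_mate {p} (T T' : {set triple p}) : Prop :=
  [/\ partial_latin T', cells T = cells T', T :&: T' = set0,
      (forall i, row_syms T i = row_syms T' i) &
      (forall j, col_syms T j = col_syms T' j)].

Definition orthogonal {p} (L1 L2 : {set triple p}) : Prop :=
  forall a b : 'I_p,
    #|[set c : 'I_p * 'I_p | ((c.1, c.2, a) \in L1) && ((c.1, c.2, b) \in L2)]| = 1.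

Definition orthogonal_trade (p l k : nat) (T : {set triple p}) : Prop :=
  T \subset Bp p l /\
  exists T' : {set triple p},
    disjoint_mate T T' /\ orthogonal ((Bp p l :\: T) :|: T') (Bp p k).
Arguments orthogonal_trade : clear implicits.

(** The rows and columns of a Latin trade carry the same symbols as those of
    its mate, so an entry of the mate with symbol s lies in a row and in a
    column of T that both contain s, at two distinct entries of T (they cannot
    coincide, since T and its mate are disjoint): hence s occurs at least twice
    in T.  If s occurred exactly twice, at (i1, j1) and (i2, j2), the pair
    (s, k i1 + j1), which B_p covered at (i1, j1), must still be covered by the
    new square.  Since B_p and B_p(k) are orthogonal, it is not covered by a
    cell kept from B_p, and a cell of the mate with symbol s lies at (i1, j2)
    or (i2, j1), where it would force j1 = j2 or k i1 = k i2 (mod p),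
    contradicting that B_p is Latin. *)
From mathcomp Require Import all_boot.
Set Implicit Arguments. Unset Strict Implicit. Unset Printing Implicit Defensive.

Lemma triple_eq p (t u : triple p) :
  trow t = trow u -> tcol t = tcol u -> tsym t = tsym u -> t = u.
Proof. by case: t => [[? ?] ?]; case: u => [[? ?] ?]; rewrite /trow /tcol /tsym /= => -> -> ->. Qed.

Lemma eqn_modMl_prime p m a b : prime p -> ~~ (p %| m) ->
  (m * a == m * b %[mod p]) = (a == b %[mod p]).
Proof.
move=> p_pr p_ndvd_m; wlog le_ba : a b / b <= a.
  move=> W; case: (leqP b a) => [/W // | /ltnW /W].
  by rewrite eq_sym => ->; rewrite eq_sym.
by rewrite !eqn_mod_dvd ?leq_mul2l ?le_ba ?orbT // -mulnBr Euclid_dvdM // (negbTE p_ndvd_m).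
Qed.

Lemma mod_small_eq p a b : a < p -> b < p -> a = b %[mod p] -> a = b.
Proof. by move=> ap bp; rewrite !modn_small. Qed.

Lemma affine_mod_inj p k i j i' j' : prime p -> ~~ (p %| k.-1) -> 0 < k ->
  i < p -> i' < p ->
  i + j = i' + j' %[mod p] -> k * i + j = k * i' + j' %[mod p] -> i = i'.
Proof.
move=> p_pr p_ndvd k_gt0 ip i'p sum_eq.
rewrite -(prednK k_gt0) !mulSn (addnC i) (addnC i') -!addnA.
rewrite -modnDmr sum_eq modnDmr => /eqP; rewrite eqn_modDr eqn_modMl_prime //.
by move/eqP; apply: mod_small_eq.
Qed.

Lemma in_Bp p l (t : triple p) :
  (t \in Bp p l) = (nat_of_ord (tsym t) == (l * trow t + tcol t) %% p).
Proof. by rewrite inE. Qed.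

Lemma Bp1_row_sym_inj p (t u : triple p) : t \in Bp p 1 -> u \in Bp p 1 ->
  trow t = trow u -> tsym t = tsym u -> t = u.
Proof.
rewrite !in_Bp !mul1n => /eqP tB /eqP uB er es; apply: triple_eq => //.
apply: ord_inj; apply: (mod_small_eq (ltn_ord _) (ltn_ord _)); apply/eqP.
by rewrite -(eqn_modDl (trow t)) {2}er -tB -uB es.
Qed.

Lemma Bp1_col_sym_inj p (t u : triple p) : t \in Bp p 1 -> u \in Bp p 1 ->
  tcol t = tcol u -> tsym t = tsym u -> t = u.
Proof.
rewrite !in_Bp !mul1n => /eqP tB /eqP uB ec es; apply: triple_eq => //.
apply: ord_inj; apply: (mod_small_eq (ltn_ord _) (ltn_ord _)); apply/eqP.
by rewrite -(eqn_modDr (tcol t)) {2}ec -tB -uB es.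
Qed.

Lemma Bp1_Bpk_sym_inj p k (t u : triple p) : prime p -> 1 < k -> k < p ->
  t \in Bp p 1 -> u \in Bp p 1 -> tsym t = tsym u ->
  k * trow t + tcol t = k * trow u + tcol u %[mod p] -> t = u.
Proof.
move=> p_pr k_gt1 k_ltp tB uB es ek; apply: (Bp1_row_sym_inj tB uB _ es).
apply/ord_inj/(affine_mod_inj p_pr _ _ (ltn_ord _) (ltn_ord _) _ ek).
- by rewrite gtnNdvd // ?ltn_predRL // (leq_ltn_trans (leq_pred k)).
- exact: ltnW.
move: tB uB; rewrite !in_Bp !mul1n => /eqP <- /eqP <-.
by rewrite es.
Qed.

Lemma orthogonal_cover p (L1 L2 : {set triple p}) a b : orthogonal L1 L2 ->
  exists c : 'I_p * 'I_p, ((c.1, c.2, a) \in L1) && ((c.1, c.2, b) \in L2).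
Proof.
by move=> /(_ a b) /eqP; rewrite eqn_leq => /andP[_ /card_gt0P[c]]; rewrite inE; exists c.
Qed.

Section DisjointMate.

Variables (p : nat) (T T' : {set triple p}).
Hypothesis mate : disjoint_mate T T'.

Lemma mate_notin u : u \in T' -> u \notin T.
Proof.
case: mate => _ _ disj _ _ uT'; apply/negP => uT.
by have := in_setI u T T'; rewrite uT uT' disj inE.
Qed.

Lemma row_sym_mate t : t \in T ->
  exists2 u, u \in T' & trow u = trow t /\ tsym u = tsym t.
Proof.
case: mate => _ _ _ rowE _ tT.
have : tsym t \in row_syms T (trow t) by apply/imsetP; exists t; rewrite // inE tT eqxx.
by rewrite rowE => /imsetP[u]; rewrite inE => /andP[uT' /eqP ur] ->; exists u.
Qed.

Lemma mate_row_sym u : u \in T' ->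
  exists2 t, t \in T & trow t = trow u /\ tsym t = tsym u.
Proof.
case: mate => _ _ _ rowE _ uT'.
have : tsym u \in row_syms T' (trow u) by apply/imsetP; exists u; rewrite // inE uT' eqxx.
by rewrite -rowE => /imsetP[t]; rewrite inE => /andP[tT /eqP tr] ->; exists t.
Qed.

Lemma mate_col_sym u : u \in T' ->
  exists2 t, t \in T & tcol t = tcol u /\ tsym t = tsym u.
Proof.
case: mate => _ _ _ _ colE uT'.
have : tsym u \in col_syms T' (tcol u) by apply/imsetP; exists u; rewrite // inE uT' eqxx.
by rewrite -colE => /imsetP[t]; rewrite inE => /andP[tT /eqP tc] ->; exists t.
Qed.

Lemma mate_witnesses u : u \in T' ->
  exists t v, [/\ t \in T, v \in T, t != v,
    trow t = trow u /\ tsym t = tsym u & tcol v = tcol u /\ tsym v = tsym u].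
Proof.
move=> uT'; have [t tT [tr ts]] := mate_row_sym uT'.
have [v vT [vc vs]] := mate_col_sym uT'.
exists t, v; split=> //; apply: contraNneq (mate_notin uT') => tv.
by rewrite -(triple_eq tr _ ts) // tv.
Qed.

Lemma symbol_occurs_twice s : (exists2 t, t \in T & tsym t = s) ->
  1 < #|[set t in T | tsym t == s]|.
Proof.
case=> t0 t0T <-; have [u uT' [_ us]] := row_sym_mate t0T.
have [t [v [tT vT tv [_ ts] [_ vs]]]] := mate_witnesses uT'.
by apply/card_gt1P; exists t, v; rewrite !inE tT vT ts vs us !eqxx.
Qed.

End DisjointMate.

Section OrthogonalTradeB1.

Variables (p k : nat) (T T' : {set triple p}).
Hypotheses (p_pr : prime p) (k_gt1 : 1 < k) (k_ltp : k < p).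
Hypotheses (T_sub : T \subset Bp p 1) (mate : disjoint_mate T T').
Hypothesis orth : orthogonal ((Bp p 1 :\: T) :|: T') (Bp p k).

Lemma symbol_not_twice s : #|[set t in T | tsym t == s]| != 2.
Proof.
apply/negP => /cards2P[t1 [t2 [_ S12]]].
have inS t : (t \in T) && (tsym t == s) = (t == t1) || (t == t2).
  by move/setP/(_ t): S12; rewrite !inE.
have /andP[t1T /eqP t1s] : (t1 \in T) && (tsym t1 == s) by rewrite inS eqxx.
have /andP[t2T /eqP t2s] : (t2 \in T) && (tsym t2 == s) by rewrite inS eqxx orbT.
have inB t : t \in T -> t \in Bp p 1 := subsetP T_sub t.
have p_gt0 : 0 < p := prime_gt0 p_pr.
pose b := Ordinal (ltn_pmod (k * trow t1 + tcol t1) p_gt0).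
have [[c1 c2] /= /andP[cL cB]] := orthogonal_cover s b orth.
have {}cB : k * c1 + c2 = k * trow t1 + tcol t1 %[mod p] by move: cB; rewrite in_Bp => /eqP /= ->.
have k_ndvd : ~~ (p %| k) by rewrite gtnNdvd // ltnW.
case/setUP: cL => [/setDP[cB1 cT] | cT'].
- suff c_t1 : (c1, c2, s) = t1 by move: cT; rewrite c_t1 t1T.
  exact: Bp1_Bpk_sym_inj p_pr k_gt1 k_ltp cB1 (inB _ t1T) (esym t1s) cB.
- have [t [v [tT vT tv [tr ts] [vc vs]]]] := mate_witnesses mate cT'.
  have tr' : trow t = c1 := tr.
  have vc' : tcol v = c2 := vc.
  have : (t == t1) || (t == t2) by rewrite -inS tT ts eqxx.
  have : (v == t1) || (v == t2) by rewrite -inS vT vs eqxx.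
  case/orP=> /eqP ev; case/orP=> /eqP et; subst v t; rewrite ?eqxx // in tv.
  + have r_eq : trow t2 = trow t1.
      apply: ord_inj; apply: mod_small_eq (ltn_ord _) (ltn_ord _) _; apply/eqP.
      by rewrite -(eqn_modMl_prime _ _ p_pr k_ndvd) -(eqn_modDr (tcol t1)) tr' {1}vc' cB.
    by move: tv; rewrite (Bp1_row_sym_inj (inB _ t2T) (inB _ t1T) r_eq) ?eqxx // t1s t2s.
  + have c_eq : tcol t2 = tcol t1.
      apply: ord_inj; apply: mod_small_eq (ltn_ord _) (ltn_ord _) _; apply/eqP.
      by rewrite -(eqn_modDl (k * trow t1)) {1}tr' vc' cB.
    by move: tv; rewrite (Bp1_col_sym_inj (inB _ t2T) (inB _ t1T) c_eq) ?eqxx // t1s t2s.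
Qed.

End OrthogonalTradeB1.

Theorem lemma3p1 (p k : nat) (T : {set triple p}) :
  prime p -> odd p -> (2 <= k)%N -> (k <= p - 1)%N ->
  orthogonal_trade p 1 k T ->
  forall s : 'I_p, (exists2 t, t \in T & tsym t = s) ->
    (3 <= #|[set t in T | tsym t == s]|)%N.
Proof.
move=> p_pr _ k_gt1 k_le [T_sub [T' [mate orth]]] s occ_s.
have k_ltp : k < p by rewrite -(prednK (prime_gt0 p_pr)) ltnS -subn1.
have not2 := symbol_not_twice p_pr k_gt1 k_ltp T_sub mate orth s.
have gt1 := symbol_occurs_twice mate occ_s.
by rewrite ltn_neqAle eq_sym not2.
Qed.
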